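(* Let $n\ge1$ and let $A_1,\ldots,A_n$ be operators on $\mathbb{C}^{2^n}$ such that $A_x^\dagger=A_x$ and $A_xA_y+A_yA_x=2\delta_{xy}\mathbb{1}$ for all $x,y\in\{1,\ldots,n\}$. Define the steering functional $F=\{F_x^a: x=1,\ldots,n,\ a=1,2\}$ by $F_x^1=\tfrac12A_x$, $F_x^2=-\tfrac12A_x$. Then $$V(F)\ \ge\ \sqrt{\tfrac{n}{2}}.$$
   Context: Here $d=2^n$. An $(n,2,d)$-assemblage is a family $\sigma=\{\sigma_x^a: x=1,\ldots,n,\ a=1,2\}$ of positive semidefinite operators on $\mathbb{C}^d$ such that $\sigma_x^1+\sigma_x^2$ does not depend on $x$ and has trace $1$; $\mathcal{Q}$ is the set of all such assemblages. An assemblage has a local hidden state (LHS) model if there exist a finite index set $\Lambda$, weights $q_\lambda\ge0$ with $\sum_\lambda q_\lambda=1$, density matrices $\sigma_\lambda$ on $\mathbb{C}^d$, and probability distributions $\{p_\lambda(a|x)\}_{a=1,2}$ for each $x,\lambda$, such that $\sigma_x^a=\sum_\lambda q_\lambda p_\lambda(a|x)\sigma_\lambda$ for all $x,a$; $\mathcal{L}$ is the set of such assemblages. For a steering functional $F=\{F_x^a\}$ (a family of $d\times d$ matrices), $\langle F,\sigma\rangle=\mathrm{Tr}\big(\sum_{x,a}F_x^a\sigma_x^a\big)$, $S_{LHS}(F)=\sup\{|\langle F,\sigma\rangle|:\sigma\in\mathcal{L}\}$, $S_Q(F)=\sup\{|\langle F,\sigma\rangle|:\sigma\in\mathcal{Q}\}$,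 and $V(F)=S_Q(F)/S_{LHS}(F)$. *)

From HB Require Import structures.
From mathcomp Require Import all_boot all_order all_algebra.
From mathcomp Require Import classical_sets reals.
From mathcomp Require Import complex.
Set Implicit Arguments. Unset Strict Implicit. Unset Printing Implicit Defensive.
Import Order.TTheory GRing.Theory Num.Theory.
Local Open Scope ring_scope.

Section Steering.
Variable R : realType.
Local Notation C := R[i].

Definition adjmx m k (M : 'M[C]_(m, k)) : 'M[C]_(k, m) :=
  \matrix_(i, j) (M j i)^*.

(* positive semidefinite: Hermitian with nonnegative quadratic form
   (in the numClosedField order of C, 0 <= z means z is real and >= 0) *)
Definition psd d (M : 'M[C]_d) : Prop :=
  adjmx M = M /\ forall v : 'cV[C]_d, 0 <= (adjmx v *m M *m v) 0 0.

Definition density d (M : 'M[C]_d) : Prop := psd M /\ \tr M = 1.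

(* an (n,2,d)-assemblage: x ranges over 'I_n (= {1..n}), a over 'I_2 (= {1,2}) *)
Definition assemblage n d := 'I_n -> 'I_2 -> 'M[C]_d.

Definition is_quantum n d (s : assemblage n d) : Prop :=
  (forall x a, psd (s x a)) /\
  exists rho : 'M[C]_d, \tr rho = 1 /\ forall x, s x 0 + s x 1 = rho.

(* local hidden state model with a finite hidden-variable set 'I_m *)
Definition is_LHS n d (s : assemblage n d) : Prop :=
  exists (m : nat) (q : 'I_m -> R) (rho : 'I_m -> 'M[C]_d)
         (p : 'I_m -> 'I_n -> 'I_2 -> R),
    (forall l, 0 <= q l) /\ \sum_l q l = 1 /\
    (forall l, density (rho l)) /\
    (forall l x a, 0 <= p l x a) /\
    (forall l x, p l x 0 + p l x 1 = 1) /\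
    (forall x a, s x a = \sum_l (real_complex R (q l * p l x a)) *: rho l).

Definition pairing n d (F s : assemblage n d) : C :=
  \tr (\sum_x \sum_a F x a *m s x a).

Definition S_LHS n d (F : assemblage n d) : R :=
  sup [set r : R | exists s, is_LHS s /\ r = ComplexField.Normc.normc (pairing F s)].

Definition S_Q n d (F : assemblage n d) : R :=
  sup [set r : R | exists s, is_quantum s /\ r = ComplexField.Normc.normc (pairing F s)].

Definition Vratio n d (F : assemblage n d) : R := S_Q F / S_LHS F.

Definition steerF n d (A : 'I_n -> 'M[C]_d) : assemblage n d :=
  fun x a => if a == 0 then (2^-1 : C) *: A x else - ((2^-1 : C) *: A x).

End Steering.

(* Since each A_x is a Hermitian involution, (1 +- A_x)/2 are orthogonal projectors,
   so |tr (A_x rho)| <= tr rho for every rho >= 0.  Writing <F, sigma> as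
   1/2 sum_x tr (A_x (sigma_x^1 - sigma_x^2)), this gives S_Q(F) <= n/2, and
   sigma_x^a = (1 +- A_x)/(2d) attains n/2.  Under an LHS model the functional becomes
   1/2 sum_l q_l tr (B_l rho_l) with B_l = sum_x c_x A_x and |c_x| <= 1; anticommutation
   gives B_l^2 = (sum_x c_x^2) 1 with sum_x c_x^2 <= n, hence S_LHS(F) <= sqrt n / 2,
   while an eigenstate of A_1 shows S_LHS(F) >= 1/2 > 0.
   Therefore V(F) >= sqrt n >= sqrt (n/2). *)

From HB Require Import structures.
From mathcomp Require Import all_boot all_order all_algebra.
From mathcomp Require Import classical_sets reals.
From mathcomp Require Import complex.
From mathcomp Require Import ring lra.
Import Order.TTheory GRing.Theory Num.Theory.
Local Open Scope ring_scope.

Set Implicit Arguments. Unset Strict Implicit.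

Section Steering.
Variable R : realType.
Local Notation C := R[i].
Local Notation "k %:C" := (real_complex R k) (at level 1, format "k %:C").
Local Notation normc := ComplexField.Normc.normc.

Lemma adjmxK m k (M : 'M[C]_(m, k)) : adjmx (adjmx M) = M.
Proof. by apply/matrixP => i j; rewrite !mxE conjCK. Qed.

Lemma adjmx_mul m k l (M : 'M[C]_(m, k)) (N : 'M[C]_(k, l)) :
  adjmx (M *m N) = adjmx N *m adjmx M.
Proof.
apply/matrixP => i j; rewrite !mxE rmorph_sum; apply: eq_bigr => s _.
by rewrite !mxE rmorphM mulrC.
Qed.

Lemma adjmxD m k (M N : 'M[C]_(m, k)) : adjmx (M + N) = adjmx M + adjmx N.
Proof. by apply/matrixP => i j; rewrite !mxE rmorphD. Qed.

Lemma adjmxN m k (M : 'M[C]_(m, k)) : adjmx (- M) = - adjmx M.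
Proof. by apply/matrixP => i j; rewrite !mxE rmorphN. Qed.

Lemma adjmxZ m k (c : C) (M : 'M[C]_(m, k)) : adjmx (c *: M) = c^* *: adjmx M.
Proof. by apply/matrixP => i j; rewrite !mxE rmorphM. Qed.

Lemma adjmx_sum m k (I : finType) (M : I -> 'M[C]_(m, k)) :
  adjmx (\sum_i M i) = \sum_i adjmx (M i).
Proof.
apply/matrixP => i j; rewrite !mxE !summxE rmorph_sum.
by apply: eq_bigr => l _; rewrite !mxE.
Qed.

Lemma adjmx_scalar m (c : C) : adjmx (c%:M : 'M_m) = c^*%:M.
Proof.
apply/matrixP => i j; rewrite !mxE eq_sym.
by case: (i == j); rewrite ?mulr1n ?mulr0n ?rmorph0.
Qed.

Lemma conj_real_complex (k : R) : k%:C^* = k%:C.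
Proof. by apply/conj_Creal/complex_realP; exists k. Qed.

Lemma psd_adjmx_mul d (Q : 'M[C]_d) : psd (adjmx Q *m Q).
Proof.
split; first by rewrite adjmx_mul adjmxK.
move=> v; rewrite mulmxA -adjmx_mul -mulmxA !mxE.
by apply: sumr_ge0 => i _; rewrite !mxE mulrC mul_conjC_ge0.
Qed.

Lemma psdZ d (c : C) (M : 'M[C]_d) : 0 <= c -> psd M -> psd (c *: M).
Proof.
move=> c_ge0 [M_herm M_ge0]; split; first by rewrite adjmxZ geC0_conj ?M_herm.
by move=> v; rewrite -scalemxAr -scalemxAl mxE mulr_ge0.
Qed.

Lemma mxtrace_conj_psd_ge0 d k (Q : 'M[C]_(k, d)) (rho : 'M[C]_d) :
  psd rho -> 0 <= \tr (Q *m rho *m adjmx Q).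
Proof.
move=> [_ rho_ge0]; apply: sumr_ge0 => i _.
have := rho_ge0 (adjmx (row i Q)); rewrite adjmxK -row_mul !mxE.
by rewrite (eq_bigr (fun j => (Q *m rho) i j * adjmx Q j i)) // => j _; rewrite !mxE.
Qed.

Lemma mxtrace_psd_ge0 d (rho : 'M[C]_d) : psd rho -> 0 <= \tr rho.
Proof.
by move/(mxtrace_conj_psd_ge0 1%:M); rewrite adjmx_scalar conjC1 mul1mx mulmx1.
Qed.

Definition orthoproj d (P : 'M[C]_d) := adjmx P = P /\ P *m P = P.

Lemma orthoproj_psd d (P : 'M[C]_d) : orthoproj P -> psd P.
Proof. by move=> [P_herm P_idem]; have := psd_adjmx_mul P; rewrite P_herm P_idem. Qed.

Lemma mxtrace_orthoproj_mul_ge0 d (P rho : 'M[C]_d) :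
  orthoproj P -> psd rho -> 0 <= \tr (P *m rho).
Proof.
move=> [P_herm P_idem] /(mxtrace_conj_psd_ge0 P).
by rewrite mxtrace_mulC mulmxA P_herm P_idem.
Qed.

Lemma orthoproj_half_add1 d (B : 'M[C]_d) : adjmx B = B -> B *m B = 1%:M ->
  orthoproj (2^-1 *: (1%:M + B)).
Proof.
move=> B_herm B_sqr; split.
  by rewrite adjmxZ adjmxD adjmx_scalar B_herm conjC1 geC0_conj // invr_ge0 ler0n.
rewrite -scalemxAl -scalemxAr scalerA mulmxDl !mulmxDr B_sqr !mul1mx mulmx1.
by rewrite [B + _]addrC -mulr2n -(scaler_nat 2 (_ + B)) scalerA divfK ?pnatr_eq0.
Qed.

Lemma mxtrace_involution_norm d (B rho : 'M[C]_d) :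
  adjmx B = B -> B *m B = 1%:M -> psd rho -> `|\tr (B *m rho)| <= \tr rho.
Proof.
move=> B_herm B_sqr rho_psd.
have shift (B' : 'M[C]_d) : adjmx B' = B' -> B' *m B' = 1%:M ->
    0 <= \tr rho + \tr (B' *m rho).
  move=> B'_herm B'_sqr.
  have := mxtrace_orthoproj_mul_ge0 (orthoproj_half_add1 B'_herm B'_sqr) rho_psd.
  rewrite -scalemxAl mxtraceZ mulmxDl mul1mx mxtraceD.
  by rewrite pmulr_rge0 // invr_gt0 ltr0n.
have lower := shift B B_herm B_sqr.
have upper : 0 <= \tr rho - \tr (B *m rho).
  have := shift (- B); rewrite adjmxN B_herm mulNmx mulmxN opprK mulNmx raddfN.
  exact.
have t_real : \tr (B *m rho) \is Num.real.
  have -> : \tr (B *m rho) =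
      2^-1 * ((\tr rho + \tr (B *m rho)) - (\tr rho - \tr (B *m rho))) by field.
  rewrite rpredM ?(rpredB (ger0_real lower) (ger0_real upper)) //.
  by rewrite ger0_real // invr_ge0 ler0n.
rewrite real_ler_norml //; apply/andP; split; rewrite -subr_ge0 //.
by rewrite opprK addrC.
Qed.

Lemma involution_eigenprojector d (B : 'M[C]_d) :
  (0 < d)%N -> adjmx B = B -> B *m B = 1%:M ->
  exists (eps : R) (P : 'M[C]_d),
    [/\ eps ^+ 2 = 1, orthoproj P, B *m P = eps%:C *: P & 0 < \tr P].
Proof.
move=> d_gt0 B_herm B_sqr.
pose P (eps : R) := 2^-1 *: (1%:M + eps%:C *: B).
have P_proj eps : eps ^+ 2 = 1 -> orthoproj (P eps).
  move=> eps2; apply: orthoproj_half_add1.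
    by rewrite adjmxZ conj_real_complex B_herm.
  by rewrite -scalemxAl -scalemxAr B_sqr scalerA -rmorphM -expr2 eps2 rmorph1 scale1r.
have BP eps : eps ^+ 2 = 1 -> B *m P eps = eps%:C *: P eps.
  move=> eps2; rewrite /P -scalemxAr mulmxDr mulmx1 -scalemxAr B_sqr scalemx1.
  rewrite [RHS]scalerA mulrC -scalerA.
  congr (_ *: _); rewrite scalerDr scalemx1 scalerA -rmorphM -expr2 eps2 rmorph1.
  by rewrite scale1r addrC.
have trP_ge0 eps : eps ^+ 2 = 1 -> 0 <= \tr (P eps).
  by move=> eps2; apply/mxtrace_psd_ge0/orthoproj_psd/P_proj.
have trP_sum : \tr (P 1) + \tr (P (-1)) = d%:R.
  rewrite !mxtraceZ !mxtraceD !mxtraceZ mxtrace_scalar rmorphN rmorph1.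
  by rewrite -mulrDr addrACA mulN1r mul1r subrr addr0; field.
have [tr0 | tr_neq0] := eqVneq (\tr (P 1)) 0.
  have e2 : (-1 : R) ^+ 2 = 1 by rewrite sqrrN expr1n.
  exists (-1), (P (-1)); split; [by [] | exact: P_proj | exact: BP |].
  by move: trP_sum; rewrite tr0 add0r => ->; rewrite ltr0n.
have e2 : (1 : R) ^+ 2 = 1 by rewrite expr1n.
exists 1, (P 1); split; [by [] | exact: P_proj | exact: BP |].
by rewrite lt_def tr_neq0 trP_ge0.
Qed.

Lemma normc_le (z : R[i]) (b : R) : `|z| <= b%:C -> normc z <= b.
Proof. by case: z => ? ?; rewrite normc_def lecR. Qed.

Lemma normc_real (r : R) : normc r%:C = `|r|.
Proof. by rewrite /ComplexField.Normc.normc /= expr0n /= addr0 sqrtr_sqr. Qed.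

Section Pairing.
Variables n d : nat.

Lemma eq_pairing (F s s' : assemblage R n d) :
  (forall x a, s x a = s' x a) -> pairing F s = pairing F s'.
Proof.
by move=> ss'; congr (\tr _); apply: eq_bigr => x _; apply: eq_bigr => a _; rewrite ss'.
Qed.

Lemma pairing_mixture m (F : assemblage R n d) (w : 'I_m -> C)
    (s : 'I_m -> assemblage R n d) :
  pairing F (fun x a => \sum_l w l *: s l x a) = \sum_l w l * pairing F (s l).
Proof.
rewrite /pairing -(eq_bigr _ (fun l _ => mxtraceZ _ _)) -raddf_sum /=; congr (\tr _).
under [RHS]eq_bigr do rewrite scaler_sumr.
rewrite [RHS]exchange_big; apply: eq_bigr => x _ /=.
under [RHS]eq_bigr do rewrite scaler_sumr.
rewrite [RHS]exchange_big; apply: eq_bigr => a _ /=.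
by rewrite mulmx_sumr; apply: eq_bigr => l _; rewrite scalemxAr.
Qed.

Lemma pairing_steerF (A : 'I_n -> 'M[C]_d) (s : assemblage R n d) :
  pairing (steerF A) s = 2^-1 * \sum_x (\tr (A x *m s x 0) - \tr (A x *m s x 1)).
Proof.
rewrite /pairing raddf_sum mulr_sumr; apply: eq_bigr => x _.
rewrite !big_ord_recl big_ord0 addr0 /steerF /= mulNmx -!scalemxAl raddfD raddfN /=.
rewrite !mxtraceZ mulrBr.
by congr (_ * \tr (_ *m s x _) - _ * \tr (_ *m s x _)); apply: val_inj.
Qed.

Lemma pairing_steerF_product (A : 'I_n -> 'M[C]_d) (p : 'I_n -> 'I_2 -> R)
    (rho : 'M[C]_d) :
  pairing (steerF A) (fun x a => (p x a)%:C *: rho) =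
  2^-1 * \tr ((\sum_x (p x 0 - p x 1)%:C *: A x) *m rho).
Proof.
rewrite pairing_steerF mulmx_suml raddf_sum /=; congr (_ * _); apply: eq_bigr => x _.
by rewrite -!scalemxAr -scalemxAl !mxtraceZ rmorphB mulrBl.
Qed.

Lemma is_LHS_product (p : 'I_n -> 'I_2 -> R) (rho : 'M[C]_d) :
  (forall x a, 0 <= p x a) -> (forall x, p x 0 + p x 1 = 1) -> density rho ->
  is_LHS (fun x a => (p x a)%:C *: rho).
Proof.
move=> p_ge0 p_sum1 rho_dens.
exists 1%N, (fun=> 1), (fun=> rho), (fun=> p).
split=> [l|]; first exact: ler01.
split; first by rewrite big_ord1.
do 3!split=> //.
by move=> x a; rewrite big_ord1 mul1r.
Qed.

Lemma sup_pairing_between (P : assemblage R n d -> Prop) (F s0 : assemblage R n d)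
    (b : R) :
  P s0 -> (forall s, P s -> normc (pairing F s) <= b) ->
  normc (pairing F s0) <= sup [set r | exists s, P s /\ r = normc (pairing F s)] <= b.
Proof.
move=> Ps0 le_b.
set S := [set r : R | exists s, P s /\ r = normc (pairing F s)]%classic.
have S_s0 : S (normc (pairing F s0)) by exists s0.
have S_le_b : ubound S b by move=> _ [s [Ps ->]]; exact: le_b.
by rewrite (ub_le_sup _ S_s0) ?ge_sup //; [exists (normc (pairing F s0)) | exists b].
Qed.

End Pairing.

Section Clifford.
Variables (n d : nat) (A : 'I_n -> 'M[C]_d).
Hypothesis A_herm : forall x, adjmx (A x) = A x.
Hypothesis A_anticomm :
  forall x y, A x *m A y + A y *m A x = ((x == y)%:R *+ 2)%:M.

Lemma clifford_sqr x : A x *m A x = 1%:M.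
Proof.
apply: (@scalerI _ _ 2); first by rewrite pnatr_eq0.
by rewrite !(scaler_nat 2) mulr2n A_anticomm eqxx raddfMn.
Qed.

Lemma clifford_comb_sqr (c : 'I_n -> R) :
  (\sum_x (c x)%:C *: A x) *m (\sum_x (c x)%:C *: A x) = (\sum_x c x ^+ 2)%:C%:M.
Proof.
pose f x y := (c x * c y)%:C *: (A x *m A y).
have -> : (\sum_x (c x)%:C *: A x) *m (\sum_x (c x)%:C *: A x) = \sum_x \sum_y f x y.
  rewrite mulmx_suml; apply: eq_bigr => x _; rewrite mulmx_sumr; apply: eq_bigr => y _.
  by rewrite /f -scalemxAl -scalemxAr scalerA rmorphM.
apply: (@scalerI _ _ 2); first by rewrite pnatr_eq0.
rewrite !(scaler_nat 2) mulr2n {2}exchange_big -big_split /= rmorph_sum raddf_sum.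
rewrite -sumrMnl; apply: eq_bigr => x _; rewrite -big_split (bigD1 x) //= big1.
  rewrite addr0 /f -scalerDr A_anticomm eqxx scale_scalar_mx mulrnAr mulr1.
  by rewrite raddfMn expr2.
move=> y /negbTE y_neq_x.
rewrite /f [c y * _]mulrC -scalerDr A_anticomm eq_sym y_neq_x.
by rewrite mul0rn raddf0 scaler0.
Qed.

Lemma clifford_comb_herm (c : 'I_n -> R) :
  adjmx (\sum_x (c x)%:C *: A x) = \sum_x (c x)%:C *: A x.
Proof.
by rewrite adjmx_sum; apply: eq_bigr => x _; rewrite adjmxZ conj_real_complex A_herm.
Qed.

Lemma clifford_comb_trace_norm (c : 'I_n -> R) (rho : 'M[C]_d) :
  (forall x, c x ^+ 2 <= 1) -> density rho ->
  `|\tr ((\sum_x (c x)%:C *: A x) *m rho)| <= (Num.sqrt n%:R)%:C.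
Proof.
move=> c_le1 [rho_psd tr_rho].
set B := \sum_x _; set s := \sum_x c x ^+ 2.
have s_ge0 : 0 <= s by apply: sumr_ge0 => x _; exact: sqr_ge0.
have sqrt_s_le : Num.sqrt s <= Num.sqrt n%:R.
  by apply: ler_wsqrtr; rewrite -[n in n%:R]card_ord -sumr_const; exact: ler_sum.
(* Rescaled by k = sqrt s, B is a Hermitian involution; s = 0 forces B = 0. *)
have [s0 | s_neq0] := eqVneq s 0.
  have c0 x : c x = 0.
    apply/eqP; rewrite -sqrf_eq0; apply/eqP/(psumr_eq0P _ s0) => // y _.
    exact: sqr_ge0.
  rewrite /B big1 ?mul0mx ?raddf0 ?normr0 ?ler0c ?sqrtr_ge0 // => x _.
  by rewrite c0 rmorph0 scale0r.
set k := Num.sqrt s.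
have k_gt0 : 0 < k by rewrite sqrtr_gt0 lt_def s_neq0 s_ge0.
have B'_herm : adjmx ((k^-1)%:C *: B) = (k^-1)%:C *: B.
  by rewrite adjmxZ conj_real_complex clifford_comb_herm.
have B'_sqr : (k^-1)%:C *: B *m ((k^-1)%:C *: B) = 1%:M.
  rewrite -scalemxAl -scalemxAr scalerA clifford_comb_sqr -/s -(sqr_sqrtr s_ge0) -/k.
  rewrite scale_scalar_mx -!rmorphM /= [X in X%:C](_ : _ = 1) ?rmorph1 //.
  by field; rewrite lt0r_neq0.
have := mxtrace_involution_norm B'_herm B'_sqr rho_psd.
rewrite tr_rho -scalemxAl mxtraceZ normrM ger0_norm ?ler0c ?invr_ge0 ?(ltW k_gt0) // => h.
have : k%:C * ((k^-1)%:C * `|\tr (B *m rho)|) <= k%:C.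
  by rewrite -[leRHS]mulr1 ler_wpM2l ?ler0c ?(ltW k_gt0).
rewrite mulrA -rmorphM divff ?rmorph1 ?mul1r ?lt0r_neq0 //.
by move/le_trans; apply; rewrite lecR.
Qed.

Lemma quantum_pairing_bound s :
  is_quantum s -> normc (pairing (steerF A) s) <= n%:R / 2.
Proof.
move=> [s_psd [rho [tr_rho s_sum]]]; apply: normc_le.
have term_le1 x : `|\tr (A x *m s x 0) - \tr (A x *m s x 1)| <= 1.
  rewrite -tr_rho -(s_sum x) mxtraceD; apply: le_trans (ler_normB _ _) _.
  by apply: lerD; apply: mxtrace_involution_norm (A_herm x) (clifford_sqr x) _.
rewrite pairing_steerF normrM ger0_norm ?invr_ge0 ?ler0n // fmorph_div /= !rmorph_nat.
rewrite [leRHS]mulrC ler_wpM2l ?invr_ge0 ?ler0n //.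
apply: le_trans (ler_norm_sum _ _ _) _.
by rewrite -[n in n%:R]card_ord -sumr_const; apply: ler_sum.
Qed.

Lemma LHS_pairing_bound s :
  is_LHS s -> normc (pairing (steerF A) s) <= Num.sqrt n%:R / 2.
Proof.
move=> [m [q [rho [p [q_ge0 [q_sum1 [rho_dens [p_ge0 [p_sum1 s_eq]]]]]]]]].
have s_mixture x a : s x a = \sum_l (q l)%:C *: ((p l x a)%:C *: rho l).
  by rewrite s_eq; apply: eq_bigr => l _; rewrite rmorphM scalerA.
rewrite (eq_pairing _ s_mixture) pairing_mixture; apply: normc_le.
apply: le_trans (ler_norm_sum _ _ _) _.
have -> : (Num.sqrt n%:R / 2)%:C = \sum_l (q l)%:C * (2^-1 * (Num.sqrt n%:R)%:C).
  by rewrite -mulr_suml -rmorph_sum q_sum1 rmorph1 mul1r fmorph_div /= rmorph_nat mulrC.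
have half_ge0 : (0 : C) <= 2^-1 by rewrite invr_ge0 ler0n.
apply: ler_sum => l _; have ql_ge0 : 0 <= (q l)%:C by rewrite ler0c.
rewrite pairing_steerF_product !normrM (ger0_norm ql_ge0) (ger0_norm half_ge0).
rewrite ler_wpM2l // ler_wpM2l //; apply: clifford_comb_trace_norm => // x.
by have := p_ge0 l x 0; have := p_ge0 l x 1; have := p_sum1 l x; nra.
Qed.

Lemma quantum_witness : (0 < d)%N ->
  exists s, is_quantum s /\ pairing (steerF A) s = (n%:R / 2)%:C.
Proof.
move=> d_gt0; have d_neq0 : (d%:R : C) != 0 by rewrite pnatr_eq0 -lt0n.
pose B x (a : 'I_2) := if a == 0 then A x else - A x.
pose s : assemblage R n d :=
  fun x a => (d%:R : C)^-1 *: ((2 : C)^-1 *: (1%:M + B x a)).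
have s_diff x : s x 0 - s x 1 = (d%:R : C)^-1 *: A x.
  rewrite /s /B /= -!scalerBr opprD addrACA subrr add0r opprK -mulr2n.
  by rewrite -(scaler_nat 2 (A x)) [2^-1 *: _]scalerA mulVf ?pnatr_eq0 // scale1r.
exists s; split.
  split=> [x a|].
    apply: psdZ; first by rewrite invr_ge0 ler0n.
    apply/orthoproj_psd/orthoproj_half_add1; rewrite /B; case: (a == 0);
      by rewrite ?adjmxN ?mulNmx ?mulmxN ?opprK ?A_herm ?clifford_sqr.
  exists (d%:R^-1%:M); split.
    by rewrite mxtrace_scalar -(mulr_natr d%:R^-1) mulVf.
  move=> x; rewrite /s /B /= -scalerDr -scalerDr addrACA subrr addr0 -mulr2n.
  by rewrite -(scaler_nat 2 1%:M) [2^-1 *: _]scalerA mulVf ?pnatr_eq0 // scale1r scalemx1.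
rewrite pairing_steerF fmorph_div /= !rmorph_nat mulrC; congr (_ * _).
rewrite -[n in n%:R]card_ord -sumr_const; apply: eq_bigr => x _.
have -> : \tr (A x *m s x 0) - \tr (A x *m s x 1) = \tr (A x *m (s x 0 - s x 1)).
  by rewrite mulmxBr raddfB.
by rewrite s_diff -scalemxAr clifford_sqr mxtraceZ mxtrace_scalar mulVf.
Qed.

Lemma LHS_witness (x0 : 'I_n) : (0 < d)%N ->
  exists s, is_LHS s /\ pairing (steerF A) s = (2^-1)%:C.
Proof.
move=> d_gt0.
have [eps [P [eps2 P_proj AP trP_gt0]]] :=
  involution_eigenprojector d_gt0 (A_herm x0) (clifford_sqr x0).
have trP_neq0 : \tr P != 0 by rewrite lt0r_neq0.
pose rho := (\tr P)^-1 *: P.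
have rho_dens : density rho.
  split; last by rewrite mxtraceZ mulVf.
  by apply: psdZ; [rewrite invr_ge0 ltW | exact: orthoproj_psd].
have A_rho : \tr (A x0 *m rho) = eps%:C.
  by rewrite -scalemxAr mxtraceZ AP mxtraceZ mulrCA mulVf ?mulr1.
(* Deterministic outcome matching the eigenvalue eps at x0, uniform elsewhere. *)
pose p x (a : 'I_2) := (1 + (if a == 0 then 1 else -1) * ((x == x0)%:R * eps)) / 2.
exists (fun x a => (p x a)%:C *: rho); split.
  apply: is_LHS_product => // x; last by rewrite /p /=; field.
  by move=> a; rewrite /p; case: (a == 0); case: (x == x0); rewrite /= divr_ge0 //; nra.
have p_diff x : p x 0 - p x 1 = (x == x0)%:R * eps by rewrite /p /=; field.
rewrite pairing_steerF_product; under eq_bigr do rewrite p_diff.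
rewrite (bigD1 x0) //= big1 ?addr0 => [|x /negbTE x_neq_x0]; last first.
  by rewrite x_neq_x0 mul0r rmorph0 scale0r.
rewrite eqxx mul1r -scalemxAl mxtraceZ A_rho -rmorphM -expr2 eps2 rmorph1 mulr1.
by rewrite fmorphV /= rmorph_nat.
Qed.

End Clifford.

End Steering.

Unset Implicit Arguments. Set Strict Implicit.

Theorem theorem2 (R : realType) (n : nat) (A : 'I_n -> 'M[R[i]]_(2 ^ n)) :
  (1 <= n)%N ->
  (forall x, adjmx (A x) = A x) ->
  (forall x y, A x *m A y + A y *m A x = ((x == y)%:R *+ 2)%:M) ->
  Num.sqrt (n%:R / 2 : R) <= Vratio (steerF A).
Proof.
move=> n_gt0 A_herm A_anticomm.
have d_gt0 : (0 < 2 ^ n)%N by rewrite expn_gt0.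
have [sQ [sQ_quantum sQ_val]] := quantum_witness A_herm A_anticomm d_gt0.
have [sL [sL_LHS sL_val]] := LHS_witness A_herm A_anticomm (Ordinal n_gt0) d_gt0.
have /andP[SQ_ge _] :=
  sup_pairing_between sQ_quantum (quantum_pairing_bound A_herm A_anticomm).
have /andP[SL_ge SL_le] :=
  sup_pairing_between sL_LHS (LHS_pairing_bound A_herm A_anticomm).
rewrite sQ_val normc_real ger0_norm ?divr_ge0 ?ler0n // in SQ_ge.
rewrite sL_val normc_real ger0_norm ?invr_ge0 ?ler0n // in SL_ge.
have SL_gt0 : 0 < S_LHS (steerF A) by apply: lt_le_trans SL_ge; rewrite invr_gt0 ltr0n.
rewrite /Vratio ler_pdivlMr //; apply: le_trans SQ_ge.
apply: le_trans (ler_wpM2l (sqrtr_ge0 _) SL_le) _.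
rewrite mulrA ler_pM2r ?invr_gt0 ?ltr0n // -[leRHS]sqr_sqrtr ?ler0n // expr2.
rewrite ler_wpM2r ?sqrtr_ge0 // ler_wsqrtr // ler_pdivrMr ?ltr0n //.
by rewrite ler_peMr ?ler0n // ler1n.
Qed.
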